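(* Let $A:\mathbb{R}^n\rightrightarrows\mathbb{R}^n$ be a maximally monotone symmetric linear relation. Then $q_A^*=q_{A^{-1}}$, that is, $$q_A^*(y)=\begin{cases}\frac12\langle y,A^{-1}y\rangle,& y\in\operatorname{ran}A,\\ \infty,& y\notin\operatorname{ran}A.\end{cases}$$ Consequently, $$q_A^{**}(x)=\begin{cases}\frac12\langle x,Ax\rangle,& x\in\operatorname{ran}A^{-1},\\ \infty,& x\notin\operatorname{ran}A^{-1},\end{cases}$$ so $q_A^{**}=q_A$, and $q_A$ is lower semicontinuous and convex.
   Context: A linear relation is an operator $A:\mathbb{R}^n\rightrightarrows\mathbb{R}^n$ whose graph is a linear subspace of $\mathbb{R}^n\times\mathbb{R}^n$; monotone means $\langle x^*-y^*,x-y\rangle\ge0$ on the graph; maximally monotone means no monotone operator has strictly larger graph; symmetric means $\langle x,y^*\rangle=\langle y,x^*\rangle$ for all $(x,x^* ),(y,y^* )\in\operatorname{gra}A$. $A^{-1}$ is the set-valued inverse (graph reversed). For a monotone linear relation $B$, $q_B(x)=\frac12\langle x,Bx\rangle$ for $x\in\operatorname{dom}B$ (a single value) and $q_B(x)=\infty$ otherwise. $f^*(y)=\sup_x\{\langle y,x\rangle-f(x)\}$ is the Fenchel conjugate. *)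

From HB Require Import structures.
From mathcomp Require Import all_boot all_order all_algebra.
From mathcomp Require Import all_classical all_reals all_analysis.
Import numFieldNormedType.Exports.
Set Implicit Arguments. Unset Strict Implicit. Unset Printing Implicit Defensive.
Import Order.TTheory GRing.Theory Num.Theory.
Local Open Scope classical_set_scope.
Local Open Scope ring_scope.

Section Defs.
Context {R : realType} {n : nat}.
Local Notation V := 'rV[R]_n.

Definition dotp (u v : V) : R := \sum_(i < n) u 0 i * v 0 i.

(* a set-valued operator R^n ⇉ R^n, identified with its graph *)
Definition graph_rel := set (V * V).

Definition is_linear_relation (A : graph_rel) : Prop :=
  A (0, 0) /\
  (forall p q, A p -> A q -> A (p.1 + q.1, p.2 + q.2)) /\
  (forall (a : R) p, A p -> A (a *: p.1, a *: p.2)).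

Definition monotone_rel (A : graph_rel) : Prop :=
  forall p q, A p -> A q -> 0 <= dotp (p.2 - q.2) (p.1 - q.1).

Definition maximally_monotone (A : graph_rel) : Prop :=
  monotone_rel A /\
  forall B : graph_rel, monotone_rel B -> A `<=` B -> B = A.

Definition symmetric_rel (A : graph_rel) : Prop :=
  forall p q, A p -> A q -> dotp p.1 q.2 = dotp q.1 p.2.

Definition inv_rel (A : graph_rel) : graph_rel := [set p | A (p.2, p.1)].

Definition dom_rel (A : graph_rel) : set V := [set x | exists y, A (x, y)].
Definition ran_rel (A : graph_rel) : set V := [set y | exists x, A (x, y)].

Definition qf (B : graph_rel) (x : V) : \bar R :=
  if asbool (dom_rel B x)
  then ((2%:R)^-1 * dotp x (xget 0 [set y | B (x, y)]))%:E
  else +oo%E.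

Definition fconj (f : V -> \bar R) (y : V) : \bar R :=
  ereal_sup [set ((dotp y x)%:E - f x)%E | x in [set: V]].

Definition convex_efun (f : V -> \bar R) : Prop :=
  forall (x y : V) (t : R), 0 < t < 1 ->
    let z := t *: x + (1 - t) *: y in
    (f z <= t%:E * f x + (1 - t)%:E * f y)%E.

End Defs.

(* For (z, y) in A, monotonicity and symmetry give
   <y, x> - q_A(x) <= <y, z> / 2, with equality at x = z, so q_A^* = q_{A^-1}
   on ran A.  Off ran A the supremum is infinite: if it were bounded, then
   <y, x> = 0 whenever (x, x') is in A with <x, x'> = 0 (scale the pair).
   Writing the graph of A as the row space of a block matrix [X Y], this puts
   X y^T in the column space of X Y^T, i.e. y = z' + w with (z, z') in A and
   w orthogonal to dom A.  Then (0, w) is monotonically related to A, so it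
   lies in A by maximality, and y is in ran A.  Applied to A^-1 this gives
   q_A^** = q_A, so q_A is lower semicontinuous as a conjugate; convexity is
   the inequality t (1 - t) <x - y, x' - y'> >= 0. *)

From HB Require Import structures.
From mathcomp Require Import all_boot all_order all_algebra.
From mathcomp Require Import all_classical all_reals all_analysis.
From mathcomp Require Import lra.
Import numFieldNormedType.Exports.
Set Implicit Arguments.
Unset Strict Implicit.
Unset Printing Implicit Defensive.
Import Order.TTheory GRing.Theory Num.Theory.
Local Open Scope classical_set_scope.
Local Open Scope ring_scope.

Section InnerProduct.
Context {R : realType} {n : nat}.
Implicit Types u v w : 'rV[R]_n.

Lemma dotpE u v : dotp u v = (u *m v^T) 0 0.
Proof. by rewrite /dotp !mxE; apply: eq_bigr => j _; rewrite mxE. Qed.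

Lemma dotpC u v : dotp u v = dotp v u.
Proof. by apply: eq_bigr => i _; rewrite mulrC. Qed.

Lemma dotpDl u v w : dotp (u + v) w = dotp u w + dotp v w.
Proof. by rewrite !dotpE mulmxDl mxE. Qed.

Lemma dotpZl a u v : dotp (a *: u) v = a * dotp u v.
Proof. by rewrite !dotpE -scalemxAl mxE. Qed.

Lemma dotpNl u v : dotp (- u) v = - dotp u v.
Proof. by rewrite -scaleN1r dotpZl mulN1r. Qed.

Lemma dotpBl u v w : dotp (u - v) w = dotp u w - dotp v w.
Proof. by rewrite dotpDl dotpNl. Qed.

Lemma dotp0l v : dotp 0 v = 0.
Proof. by rewrite -(scale0r 0) dotpZl mul0r. Qed.

Lemma dotpDr u v w : dotp u (v + w) = dotp u v + dotp u w.
Proof. by rewrite dotpC dotpDl !(dotpC u). Qed.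

Lemma dotpZr a u v : dotp u (a *: v) = a * dotp u v.
Proof. by rewrite dotpC dotpZl dotpC. Qed.

Lemma dotpNr u v : dotp u (- v) = - dotp u v.
Proof. by rewrite dotpC dotpNl dotpC. Qed.

Lemma dotpBr u v w : dotp u (v - w) = dotp u v - dotp u w.
Proof. by rewrite dotpDr dotpNr. Qed.

Lemma dotp0r u : dotp u 0 = 0.
Proof. by rewrite dotpC dotp0l. Qed.

Lemma dotp_continuous w : continuous (dotp ^~ w).
Proof.
rewrite /dotp; apply: (@continuous_big _ _ +%R 0 xpredT add_continuous) => i _.
move=> y; apply: (continuousM (s := fun v : 'rV_n => v 0 i) (t := fun=> w 0 i)).
  exact: coord_continuous.
exact: cst_continuous.
Qed.

End InnerProduct.

Section ColumnSpace.
Context {R : realType}.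

Lemma col_spaceP m k (M : 'M[R]_(m, k)) (c : 'cV_m) :
  (forall u : 'rV_m, u *m M = 0 -> u *m c = 0) -> exists v : 'cV_k, c = M *m v.
Proof.
move=> ker_c; have /submxP[D cTE] : (c^T <= M^T)%MS.
  rewrite submxE -trmx_eq0 trmx_mul trmxK; apply/eqP/row_matrixP => i.
  rewrite row_mul row0; apply: ker_c.
  by rewrite -row_mul -[_ *m M]trmxK trmx_mul trmxK mulmx_coker trmx0 row0.
by exists D^T; rewrite -[c]trmxK cTE trmx_mul trmxK.
Qed.

End ColumnSpace.

Section FiniteBasis.
Context {R : realType} {n : nat}.
Variable A : set ('rV[R]_n * 'rV[R]_n).
Hypothesis linA : is_linear_relation A.

Definition spans_in {m} (X Y : 'M[R]_(m, n)) :=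
  forall u : 'rV_m, A (u *m X, u *m Y).

Lemma spans_in_col_mx m (X Y : 'M[R]_(m, n)) (x y : 'rV_n) :
  spans_in X Y -> A (x, y) -> spans_in (col_mx X x) (col_mx Y y).
Proof.
have [_ [addA scaleA]] := linA.
move=> XY_A xyA u; rewrite -[u]hsubmxK !mul_row_col [rsubmx u]mx11_scalar.
rewrite !mul_scalar_mx.
exact: (addA _ _ (XY_A _) (scaleA _ _ xyA)).
Qed.

Lemma linear_relation_finite_basis : exists m (X Y : 'M[R]_(m, n)),
  spans_in X Y /\ forall x y, A (x, y) -> exists u, x = u *m X /\ y = u *m Y.
Proof.
have [A0 _] := linA.
pose P (k : nat) := `[< exists m (X Y : 'M[R]_(m, n)),
  spans_in X Y /\ \rank (row_mx X Y) = k >].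
have P0 : P 0%N.
  apply/asboolP; exists 0%N, 0, 0; split; last by rewrite row_mx0 mxrank0.
  by move=> u; rewrite !mulmx0.
have Pub (k : nat) : P k -> (k <= n + n)%N.
  by move=> /asboolP[m [X [Y [_ <-]]]]; exact: rank_leq_col.
have [k /asboolP[m [X [Y [XY_A rkXY]]]] kmax] :=
  ex_maxnP (ex_intro _ 0%N P0) Pub.
exists m, X, Y; split => // x y xyA.
have [/submxP[u]|xy_notin] := boolP (row_mx x y <= row_mx X Y)%MS.
  by rewrite mul_mx_row => /eq_row_mx[-> ->]; exists u.
have : (\rank (row_mx (col_mx X x) (col_mx Y y)) <= k)%N.
  apply: kmax; apply/asboolP; exists (m + 1)%N, (col_mx X x), (col_mx Y y).
  by split => //; exact: spans_in_col_mx.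
rewrite -block_mxEh block_mxEv -addsmxE -rkXY leqNgt.
have /ltn_leqif -> := mxrank_leqif_sup (addsmxSl (row_mx X Y) (row_mx x y)).
by rewrite addsmx_sub submx_refl xy_notin.
Qed.

End FiniteBasis.

Section MaximallyMonotone.
Context {R : realType} {n : nat}.
Variable A : set ('rV[R]_n * 'rV[R]_n).
Hypotheses (linA : is_linear_relation A) (mmA : maximally_monotone A).

Lemma maximally_monotone_orth_dom w :
  (forall x y, A (x, y) -> dotp w x = 0) -> A (0, w).
Proof.
have [A0 _] := linA; have [monoA maxA] := mmA.
move=> w_orth; pose B := A `|` [set (0, w)].
suff <- : B = A by right.
apply: maxA => [|p Ap]; last by left.
have mono_0w x y : A (x, y) -> 0 <= dotp (y - w) x.
  move=> xyA; rewrite dotpBl (w_orth _ _ xyA) subr0 -[x]subr0 -[y]subr0.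
  exact: monoA xyA A0.
move=> [x y] [x' y'] /= [xyA|[-> ->]] [xyA'|[-> ->]] /=.
- exact: monoA xyA xyA'.
- by rewrite subr0; exact: mono_0w.
- by rewrite sub0r dotpNr -opprB dotpNl opprK; exact: mono_0w.
- by rewrite !subrr dotp0r.
Qed.

Section BoundedConjugate.
Variables (y : 'rV[R]_n) (S : R).
Hypothesis conj_bounded :
  forall x xs, A (x, xs) -> dotp y x - 2%:R^-1 * dotp x xs <= S.

Lemma bounded_conj_orth x xs : A (x, xs) -> dotp x xs = 0 -> dotp y x = 0.
Proof.
have [_ [_ scaleA]] := linA.
move=> xxsA x_xs0; have t_bounded t : t * dotp y x <= S.
  have := conj_bounded (scaleA t (x, xs) xxsA).
  by rewrite /= dotpZr dotpZl dotpZr x_xs0 !mulr0 subr0.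
apply/eqP; apply: contraT => yx_neq0.
have := t_bounded ((`|S| + 1) / dotp y x); rewrite divfK //.
have := ler_norm S; lra.
Qed.

Lemma ran_of_bounded_conj : ran_rel A y.
Proof.
have [_ [addA _]] := linA.
have [m [X [Y [XY_A XY_span]]]] := linear_relation_finite_basis linA.
have [v Xy] : exists v : 'cV_m, X *m y^T = X *m Y^T *m v.
  apply: col_spaceP => u uXY0.
  have uXuY0 : dotp (u *m X) (u *m Y) = 0.
    by rewrite dotpE trmx_mul !mulmxA -(mulmxA u) uXY0 !mul0mx mxE.
  apply/matrixP => i j; rewrite !ord1 [RHS]mxE mulmxA -dotpE dotpC.
  exact: bounded_conj_orth (XY_A u) uXuY0.
pose zs := v^T *m Y.
have w_orth x xs : A (x, xs) -> dotp (y - zs) x = 0.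
  case/XY_span => u [-> _].
  rewrite dotpBl (dotpC y) (dotpC zs) !dotpE -mulmxA Xy.
  by rewrite trmx_mul trmxK !mulmxA subrr.
exists (v^T *m X).
have := addA _ _ (XY_A v^T) (maximally_monotone_orth_dom w_orth).
by rewrite /= addr0 addrC subrK.
Qed.

End BoundedConjugate.
End MaximallyMonotone.

Section Inverse.
Context {R : realType} {n : nat}.
Implicit Types A : set ('rV[R]_n * 'rV[R]_n).

Lemma inv_relK A : inv_rel (inv_rel A) = A.
Proof. by apply/seteqP; split => -[]. Qed.

Lemma linear_relation_inv A :
  is_linear_relation A -> is_linear_relation (inv_rel A).
Proof.
move=> [A0 [addA scaleA]]; split => //; split => [p q|a p].
  exact: addA (p.2, p.1) (q.2, q.1).
exact: scaleA a (p.2, p.1).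
Qed.

Lemma monotone_inv A : monotone_rel A -> monotone_rel (inv_rel A).
Proof. by move=> monoA p q pA qA; rewrite dotpC; exact: monoA pA qA. Qed.

Lemma maximally_monotone_inv A :
  maximally_monotone A -> maximally_monotone (inv_rel A).
Proof.
move=> [monoA maxA]; split => [|B monoB AB]; first exact: monotone_inv.
rewrite -[B]inv_relK; congr inv_rel.
by apply: maxA => [|[x y] xyA]; [exact: monotone_inv | exact: AB (y, x) xyA].
Qed.

Lemma symmetric_inv A : symmetric_rel A -> symmetric_rel (inv_rel A).
Proof.
move=> symA [x y] [x' y'] xyA xyA'.
by rewrite /= dotpC -(symA _ _ xyA xyA') dotpC.
Qed.

End Inverse.

Section QuadraticForm.
Context {R : realType} {n : nat}.
Implicit Types (A : set ('rV[R]_n * 'rV[R]_n)) (f : 'rV[R]_n -> \bar R).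

Lemma qfE A x xs : symmetric_rel A -> A (x, xs) ->
  qf A x = (2%:R^-1 * dotp x xs)%:E.
Proof.
move=> symA xxsA; rewrite /qf asboolT; last by exists xs.
by rewrite (symA _ _ xxsA (xgetI 0 (P := [set y | A (x, y)]) xxsA)).
Qed.

Lemma qf_notin_dom A x : ~ dom_rel A x -> qf A x = +oo%E.
Proof. by move=> xA; rewrite /qf asboolF. Qed.

Lemma fconj_ge f x y : ((dotp y x)%:E - f x <= fconj f y)%E.
Proof. by apply: ereal_sup_ubound; exists x. Qed.

Lemma fconj_le f y a :
  (forall x, (dotp y x)%:E - f x <= a)%E -> (fconj f y <= a)%E.
Proof. by move=> le_a; apply: ge_ereal_sup => _ [x _ <-]. Qed.

Lemma fconj_qf_ran A y z : monotone_rel A -> symmetric_rel A -> A (z, y) ->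
  fconj (qf A) y = (2%:R^-1 * dotp y z)%:E.
Proof.
move=> monoA symA zyA; apply/le_anti/andP; split.
  apply: fconj_le => x.
  have [[xs xxsA]|/qf_notin_dom->] := pselect (dom_rel A x).
    rewrite (qfE symA xxsA) -EFinB lee_fin.
    have := monoA _ _ xxsA zyA; have := symA _ _ xxsA zyA.
    rewrite /= !dotpBl !dotpBr (dotpC xs x) (dotpC xs z) (dotpC y x); lra.
  by rewrite addeNy leNye.
have := fconj_ge (qf A) z y; rewrite (qfE symA zyA) -EFinB (dotpC z).
by apply: le_trans; rewrite lee_fin; lra.
Qed.

Lemma fconj_qf_notin_ran A y :
  is_linear_relation A -> maximally_monotone A -> symmetric_rel A ->
  ~ ran_rel A y -> fconj (qf A) y = +oo%E.
Proof.
move=> linA mmA symA yA; have [A0 _] := linA.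
have := fconj_ge (qf A) 0 y; rewrite (qfE symA A0) !dotp0r mulr0 subee //.
case E : (fconj (qf A) y) => [S||] // _; exfalso; apply: yA.
apply: (ran_of_bounded_conj linA mmA (S := S)) => x xs xxsA.
by have := fconj_ge (qf A) x y; rewrite E (qfE symA xxsA) -EFinB lee_fin.
Qed.

Lemma fconj_qf A : is_linear_relation A -> maximally_monotone A ->
  symmetric_rel A -> fconj (qf A) = qf (inv_rel A).
Proof.
move=> linA mmA symA; apply/funext => y.
have [[z zyA]|yA] := pselect (ran_rel A y).
  by rewrite (fconj_qf_ran mmA.1 symA zyA) (qfE (symmetric_inv symA) zyA).
by rewrite fconj_qf_notin_ran // qf_notin_dom.
Qed.

Lemma fconj_lsc f : lower_semicontinuous (fconj f).
Proof.
move=> y a /ereal_sup_gt[_ [x _ <-] a_lt].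
have above_a z : (a%:E < (dotp z x)%:E - f x)%E -> (a%:E < fconj f z)%E.
  by move=> /lt_le_trans; apply; exact: fconj_ge.
case fx : (f x) => [r||] in a_lt *.
- exists ((fun z => dotp z x - r) @^-1` [set b | a < b]) => [|z /= az].
    have cont_at_y : {for y, continuous (fun z => dotp z x - r)}.
      by apply: continuousB; [exact: dotp_continuous | exact: cst_continuous].
    apply: cont_at_y.
    apply: open_nbhs_nbhs; split; first exact: open_gt.
    by rewrite /= -lte_fin EFinB.
  by apply: above_a; rewrite fx -EFinB lte_fin.
- by rewrite addeNy in a_lt.
- by exists setT => [|z _]; [exact: filterT | apply: above_a; rewrite fx].
Qed.

Lemma qf_ge0 A x : A (0, 0) -> monotone_rel A -> symmetric_rel A ->
  (0 <= qf A x)%E.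
Proof.
move=> A0 monoA symA.
have [[xs xxsA]|/qf_notin_dom->] := pselect (dom_rel A x).
  rewrite (qfE symA xxsA) lee_fin mulr_ge0 ?invr_ge0 ?ler0n //.
  by have := monoA _ _ xxsA A0; rewrite /= !subr0 dotpC.
by rewrite leey.
Qed.

Lemma qf_convex A :
  is_linear_relation A -> monotone_rel A -> symmetric_rel A ->
  convex_efun (qf A).
Proof.
move=> [A0 [addA scaleA]] monoA symA x y t /andP[t_gt0 t_lt1] /=.
have [[[xs xxsA] [ys yysA]]|/not_andP not_dom] :=
  pselect (dom_rel A x /\ dom_rel A y); last first.
  have scale_qf_neqNy (s : R) z : 0 < s -> (s%:E * qf A z)%E != -oo%E.
    move=> s_gt0; have : (0 <= s%:E * qf A z)%E.
      by apply: mule_ge0; [rewrite lee_fin ltW | exact: qf_ge0].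
    by case: (s%:E * qf A z)%E.
  have t'_gt0 : 0 < 1 - t by rewrite subr_gt0.
  suff -> : (t%:E * qf A x + (1 - t)%:E * qf A y)%E = +oo%E by rewrite leey.
  case: not_dom => /qf_notin_dom->.
    by rewrite gt0_muley ?lte_fin // addye ?scale_qf_neqNy.
  by rewrite gt0_muley ?lte_fin // addey ?scale_qf_neqNy.
have zA := addA (_, _) (_, _) (scaleA t _ xxsA) (scaleA (1 - t) _ yysA).
rewrite (qfE symA zA) (qfE symA xxsA) (qfE symA yysA) -!EFinM -EFinD lee_fin.
have := monoA _ _ xxsA yysA; have := symA _ _ xxsA yysA.
rewrite /= !dotpBl !dotpBr !dotpDl !dotpDr !dotpZl !dotpZr.
rewrite (dotpC xs x) (dotpC xs y) (dotpC ys x) (dotpC ys y).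
set a := dotp x xs; set b := dotp x ys; set c := dotp y xs; set d := dotp y ys.
move=> sym_xy mono_xy.
(* the two sides differ by [t (1 - t) / 2 * <x - y, xs - ys>] *)
have : 0 <= t * (1 - t) * (a - b - c + d).
  by rewrite mulr_ge0 ?mulr_ge0 //; lra.
nra.
Qed.

End QuadraticForm.

Theorem proposition4p25 (R : realType) (n : nat) (A : set ('rV[R]_n * 'rV[R]_n)) :
  is_linear_relation A -> maximally_monotone A -> symmetric_rel A ->
  fconj (qf A) = qf (inv_rel A) /\
  (forall y, fconj (qf A) y =
     if asbool (ran_rel A y)
     then ((2%:R)^-1 * dotp y (xget 0 [set x | inv_rel A (y, x)]))%:E
     else +oo%E) /\
  (forall x, fconj (fconj (qf A)) x =
     if asbool (ran_rel (inv_rel A) x)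
     then ((2%:R)^-1 * dotp x (xget 0 [set y | A (x, y)]))%:E
     else +oo%E) /\
  fconj (fconj (qf A)) = qf A /\
  lower_semicontinuous (qf A) /\ convex_efun (qf A).
Proof.
move=> linA mmA symA.
have conjA := fconj_qf linA mmA symA.
have biconjA : fconj (fconj (qf A)) = qf A.
  rewrite conjA fconj_qf ?inv_relK //.
  - exact: linear_relation_inv.
  - exact: maximally_monotone_inv.
  - exact: symmetric_inv.
split=> //; split; first by move=> y; rewrite conjA.
split; first by move=> x; rewrite biconjA.
split=> //; split; last exact: qf_convex linA mmA.1 symA.
by rewrite -biconjA; exact: fconj_lsc.
Qed.
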